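(* Let $f:M\to\mathbb{R}^3$ be an immersion with eq\''uiaffine transversal vector field $\xi$ and positive definite induced bilinear form $h$, let $(u,v)$ be isothermal coordinates centered at an umbilical point $(0,0)$ with $\lambda_0=b_{11}(0,0)=b_{22}(0,0)\neq0$, and set $q_0=f(0,0)+\lambda_0^{-1}\xi(0,0)$. Let $k\ge1$. Then $(0,0)$ is umbilical of order $\ge k$ (i.e. the $(k-1)$-jet at $(0,0)$ of $\mathcal{B}=(b_{11}-b_{22},2b_{12})$ vanishes) if and only if $$f(u,v)+\lambda_0^{-1}\xi(u,v)=q_0+O(k+1),$$ where $O(k+1)$ denotes terms of degree at least $k+1$ in $(u,v)$.
   Context: $D$ is the flat connection of $\mathbb{R}^3$; $h$ and the shape operator $B$ are defined by $D_Xf_*Y=f_*(\nabla_XY)+h(X,Y)\xi$, $D_X\xi=-f_*(BX)+\tau(X)\xi$, eq\''uiaffine meaning $\tau=0$. Isothermal coordinates: $h(\partial_u,\partial_u)=h(\partial_v,\partial_v)=\rho$, $h(\partial_u,\partial_v)=0$. The matrix of $B$ is given by $\xi_u=-b_{11}f_u-b_{21}f_v$, $\xi_v=-b_{12}f_u-b_{22}f_v$ (with $b_{12}=b_{21}$). Umbilical: $B$ a multiple of the identity. *)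

From Stdlib Require Import Reals List.
From Coquelicot Require Import Coquelicot.
Open Scope R_scope.

Definition fn2 := R -> R -> R.

Definition du (g : fn2) : fn2 := fun u v => Derive (fun s => g s v) u.
Definition dv (g : fn2) : fn2 := fun u v => Derive (fun t => g u t) v.

(** Iterated partial derivative: [true] = d/du, [false] = d/dv;
    the list is applied right to left.  [length w] is the order. *)
Fixpoint dpart (w : list bool) (g : fn2) : fn2 :=
  match w with
  | nil => g
  | b :: w' => (if b then du else dv) (dpart w' g)
  end.

Definition cdisc (r u v : R) : Prop := u * u + v * v < r * r.

Definition smooth_on (r : R) (g : fn2) : Prop :=
  forall (w : list bool) (u v : R), cdisc r u v ->
    ex_derive (fun s => dpart w g s v) u /\
    ex_derive (fun t => dpart w g u t) v /\
    continuous (fun p : R * R => dpart w g (fst p) (snd p)) (u, v).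

(** Vectors of R^3 are given by their components 0,1,2. *)
Definition det3 (a b c : nat -> R) : R :=
  a 0%nat * (b 1%nat * c 2%nat - b 2%nat * c 1%nat)
  - a 1%nat * (b 0%nat * c 2%nat - b 2%nat * c 0%nat)
  + a 2%nat * (b 0%nat * c 1%nat - b 1%nat * c 0%nat).

From Stdlib Require Import Reals List Lra Psatz.
From Coquelicot Require Import Coquelicot.
Open Scope R_scope.
Import ListNotations.

(** Put F = f + lambda0^-1 xi - q0.  By the Weingarten formula
      lambda0 F_u = (lambda0 - b11) f_u - b12 f_v,   lambda0 F_v = - b12 f_u + (lambda0 - b22) f_v,
    and since (f_u, f_v, xi) is a frame, Cramer's rule shows that F = O(k+1) if and only if
    lambda0 - b11, lambda0 - b22 and b12 are all O(k).  This is equivalent to b11 - b22 and b12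
    being O(k): the first partial derivatives of lambda0 - b22 are, by the Codazzi equations
    (which express xi_uv = xi_vu in the frame), combinations of the first derivatives of b11 - b22
    and b12 and of these functions themselves, hence O(k-1), and lambda0 - b22 vanishes at the
    umbilic. *)

Definition partial (b : bool) : fn2 -> fn2 := if b then du else dv.

Lemma dpart_app w1 w2 g : dpart (w1 ++ w2) g = dpart w1 (dpart w2 g).
Proof. induction w1 as [|b w IH]; simpl; [reflexivity | now rewrite IH]. Qed.

Lemma dpart_rcons w b g : dpart (w ++ [b]) g = dpart w (partial b g).
Proof. now rewrite dpart_app. Qed.

Definition regular_at (g : fn2) (u v : R) : Prop :=
  ex_derive (fun s => g s v) u /\ ex_derive (fun t => g u t) v /\
  continuous (fun p : R * R => g (fst p) (snd p)) (u, v).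

Lemma regular_at_const c u v : regular_at (fun _ _ => c) u v.
Proof. repeat split; [apply ex_derive_const | apply ex_derive_const | apply continuous_const]. Qed.

Lemma regular_at_plus g h u v : regular_at g u v -> regular_at h u v ->
  regular_at (fun x y => g x y + h x y) u v.
Proof.
  intros (Gu & Gv & Gc) (Hu & Hv & Hc).
  exact (conj (ex_derive_plus _ _ _ Gu Hu)
           (conj (ex_derive_plus _ _ _ Gv Hv) (continuous_plus _ _ _ Gc Hc))).
Qed.

Lemma regular_at_mult g h u v : regular_at g u v -> regular_at h u v ->
  regular_at (fun x y => g x y * h x y) u v.
Proof.
  intros (Gu & Gv & Gc) (Hu & Hv & Hc).
  exact (conj (ex_derive_mult _ _ _ Gu Hu)
           (conj (ex_derive_mult _ _ _ Gv Hv) (continuous_mult _ _ _ Gc Hc))).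
Qed.

Lemma regular_at_inv g u v : regular_at g u v -> g u v <> 0 ->
  regular_at (fun x y => / g x y) u v.
Proof.
  intros (Gu & Gv & Gc) Hg.
  exact (conj (ex_derive_inv _ _ Gu Hg)
           (conj (ex_derive_inv _ _ Gv Hg)
              (continuous_comp _ (fun z => / z) _ Gc (continuous_Rinv _ Hg)))).
Qed.

Lemma partial_const b c u v : partial b (fun _ _ => c) u v = 0.
Proof. destruct b; unfold partial, du, dv; apply Derive_const. Qed.

Lemma partial_scal b c g u v :
  partial b (fun x y => c * g x y) u v = c * partial b g u v.
Proof. destruct b; unfold partial, du, dv; apply Derive_scal. Qed.

Lemma partial_opp b g u v : partial b (fun x y => - g x y) u v = - partial b g u v.
Proof. destruct b; unfold partial, du, dv; apply Derive_opp. Qed.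

Lemma partial_plus b g h u v : regular_at g u v -> regular_at h u v ->
  partial b (fun x y => g x y + h x y) u v = partial b g u v + partial b h u v.
Proof.
  intros (Gu & Gv & _) (Hu & Hv & _).
  destruct b; [exact (Derive_plus _ _ _ Gu Hu) | exact (Derive_plus _ _ _ Gv Hv)].
Qed.

Lemma partial_minus b g h u v : regular_at g u v -> regular_at h u v ->
  partial b (fun x y => g x y - h x y) u v = partial b g u v - partial b h u v.
Proof.
  intros (Gu & Gv & _) (Hu & Hv & _).
  destruct b; [exact (Derive_minus _ _ _ Gu Hu) | exact (Derive_minus _ _ _ Gv Hv)].
Qed.

Lemma partial_mult b g h u v : regular_at g u v -> regular_at h u v ->
  partial b (fun x y => g x y * h x y) u v
  = partial b g u v * h u v + g u v * partial b h u v.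
Proof.
  intros (Gu & Gv & _) (Hu & Hv & _).
  destruct b; [exact (Derive_mult _ _ _ Gu Hu) | exact (Derive_mult _ _ _ Gv Hv)].
Qed.

Lemma partial_mult_plus_mult b g1 h1 g2 h2 u v :
  regular_at g1 u v -> regular_at h1 u v -> regular_at g2 u v -> regular_at h2 u v ->
  partial b (fun x y => g1 x y * h1 x y + g2 x y * h2 x y) u v
  = partial b g1 u v * h1 u v + g1 u v * partial b h1 u v
    + (partial b g2 u v * h2 u v + g2 u v * partial b h2 u v).
Proof.
  intros G1 H1 G2 H2.
  rewrite (partial_plus b _ _ u v (regular_at_mult _ _ u v G1 H1) (regular_at_mult _ _ u v G2 H2)).
  rewrite (partial_mult b g1 h1 u v G1 H1), (partial_mult b g2 h2 u v G2 H2).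
  reflexivity.
Qed.

Lemma partial_inv b g u v : regular_at g u v -> g u v <> 0 ->
  partial b (fun x y => / g x y) u v = (-1 * partial b g u v) * (/ g u v * / g u v).
Proof.
  intros (Gu & Gv & _) Hg.
  destruct b; unfold partial, du, dv;
    [rewrite (Derive_inv _ _ Gu Hg) | rewrite (Derive_inv _ _ Gv Hg)];
    (* the two copies of [Derive] differ only in how the domain type is written *)
    change (AbsRing.sort R_AbsRing) with R; field; exact Hg.
Qed.

Lemma det3_swap12 a b c : det3 b a c = - det3 a b c.
Proof. unfold det3. ring. Qed.

Lemma det3_rotate a b c : det3 b c a = det3 a b c.
Proof. unfold det3. ring. Qed.

Lemma cramer3 (a b c y : nat -> R) al be ga : det3 a b c <> 0 ->
  (forall i, (i < 3)%nat -> y i = al * a i + be * b i + ga * c i) ->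
  al = det3 y b c / det3 a b c /\ be = det3 a y c / det3 a b c /\
  ga = det3 a b y / det3 a b c.
Proof. intros Hd Hy. unfold det3 in *. rewrite !Hy by lia. split; [|split]; field; exact Hd. Qed.

Lemma frame_coords_unique (a b c : nat -> R) al be ga al' be' ga' : det3 a b c <> 0 ->
  (forall i, (i < 3)%nat ->
     al * a i + be * b i + ga * c i = al' * a i + be' * b i + ga' * c i) ->
  al = al' /\ be = be' /\ ga = ga'.
Proof.
  intros Hd E. set (y i := al * a i + be * b i + ga * c i).
  destruct (cramer3 a b c y al be ga Hd) as (A & B & C); [reflexivity |].
  destruct (cramer3 a b c y al' be' ga' Hd) as (A' & B' & C'); [exact E |].
  rewrite A, B, C, A', B', C'. auto.
Qed.

Section OpenDomain.

Variable D : R -> R -> Prop.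
Hypothesis D_open : forall u v, D u v -> locally_2d D u v.

Definition eq_on (g h : fn2) : Prop := forall u v, D u v -> g u v = h u v.

Lemma eq_on_near_u g h u v : eq_on g h -> D u v -> locally u (fun s => g s v = h s v).
Proof.
  intros E Huv. apply (filter_imp (fun s => D s v)); [intros s Hs; exact (E s v Hs) |].
  exact (locally_2d_1d_const_y _ _ _ (D_open u v Huv)).
Qed.

Lemma eq_on_near_v g h u v : eq_on g h -> D u v -> locally v (fun t => g u t = h u t).
Proof.
  intros E Huv. apply (filter_imp (fun t => D u t)); [intros t Ht; exact (E u t Ht) |].
  exact (locally_2d_1d_const_x _ _ _ (D_open u v Huv)).
Qed.

Lemma eq_on_near g h u v : eq_on g h -> D u v ->
  locally (u, v) (fun p : R * R => g (fst p) (snd p) = h (fst p) (snd p)).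
Proof.
  intros E Huv. apply (filter_imp (fun p : R * R => D (fst p) (snd p))).
  - intros p Hp. exact (E _ _ Hp).
  - exact (proj1 (locally_2d_locally _ _ _) (D_open u v Huv)).
Qed.

Lemma eq_on_sym g h : eq_on g h -> eq_on h g.
Proof. intros E u v Huv. symmetry. exact (E u v Huv). Qed.

Lemma eq_on_partial b g h : eq_on g h -> eq_on (partial b g) (partial b h).
Proof.
  intros E u v Huv. destruct b; unfold partial, du, dv; apply Derive_ext_loc;
    [exact (eq_on_near_u g h u v E Huv) | exact (eq_on_near_v g h u v E Huv)].
Qed.

Lemma eq_on_dpart w g h : eq_on g h -> eq_on (dpart w g) (dpart w h).
Proof.
  intros E. induction w as [|b w IH]; [exact E |].
  exact (eq_on_partial b _ _ IH).
Qed.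

Lemma regular_at_eq_on g h u v : eq_on g h -> D u v -> regular_at g u v -> regular_at h u v.
Proof.
  intros E Huv (Gu & Gv & Gc). repeat split.
  - exact (ex_derive_ext_loc _ _ _ (eq_on_near_u g h u v E Huv) Gu).
  - exact (ex_derive_ext_loc _ _ _ (eq_on_near_v g h u v E Huv) Gv).
  - exact (continuous_ext_loc _ _ _ (eq_on_near g h u v E Huv) Gc).
Qed.

(* The product rule lowers the order of differentiation by one, so closure of [smooth] under
   products is proved order by order. *)
Definition smooth_upto (n : nat) (g : fn2) : Prop :=
  forall w, (length w <= n)%nat -> forall u v, D u v -> regular_at (dpart w g) u v.

Lemma smooth_upto_regular n g u v : smooth_upto n g -> D u v -> regular_at g u v.
Proof. intros G. apply (G nil), Nat.le_0_l. Qed.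

Lemma smooth_upto_weaken n g : smooth_upto (S n) g -> smooth_upto n g.
Proof. intros G w Hw. apply G. lia. Qed.

Lemma smooth_upto_partial n b g : smooth_upto (S n) g -> smooth_upto n (partial b g).
Proof.
  intros G w Hw. rewrite <- dpart_rcons. apply G. rewrite length_app. simpl. lia.
Qed.

Lemma smooth_upto_S n g : (forall u v, D u v -> regular_at g u v) ->
  (forall b, smooth_upto n (partial b g)) -> smooth_upto (S n) g.
Proof.
  intros G0 G w. induction w as [|b w _] using rev_ind; intros Hw.
  - exact G0.
  - rewrite dpart_rcons. apply G. rewrite length_app in Hw. simpl in Hw. lia.
Qed.

Lemma smooth_upto_eq_on n g h : eq_on g h -> smooth_upto n g -> smooth_upto n h.
Proof.
  intros E G w Hw u v Huv.
  exact (regular_at_eq_on _ _ u v (eq_on_dpart w g h E) Huv (G w Hw u v Huv)).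
Qed.

Lemma smooth_upto_O g : (forall u v, D u v -> regular_at g u v) -> smooth_upto 0 g.
Proof. intros G0 [|b w] Hw; [exact G0 | simpl in Hw; lia]. Qed.

Lemma smooth_upto_const n c : smooth_upto n (fun _ _ => c).
Proof.
  revert c. induction n as [|n IH]; intros c.
  - apply smooth_upto_O. intros. apply regular_at_const.
  - apply smooth_upto_S; [intros; apply regular_at_const |].
    intros b. apply (smooth_upto_eq_on n (fun _ _ => 0)); [| apply IH].
    intros u v _. symmetry. apply partial_const.
Qed.

Lemma smooth_upto_plus n g h : smooth_upto n g -> smooth_upto n h ->
  smooth_upto n (fun x y => g x y + h x y).
Proof.
  revert g h. induction n as [|n IH]; intros g h G H.
  all: assert (Reg : forall u v, D u v -> regular_at g u v /\ regular_at h u v)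
         by (intros u v Huv;
             exact (conj (smooth_upto_regular _ g u v G Huv) (smooth_upto_regular _ h u v H Huv))).
  - apply smooth_upto_O. intros u v Huv. destruct (Reg u v Huv). apply regular_at_plus; assumption.
  - apply smooth_upto_S.
    + intros u v Huv. destruct (Reg u v Huv). apply regular_at_plus; assumption.
    + intros b. apply (smooth_upto_eq_on n (fun x y => partial b g x y + partial b h x y)).
      * intros u v Huv. destruct (Reg u v Huv). symmetry. apply partial_plus; assumption.
      * apply IH; apply smooth_upto_partial; assumption.
Qed.

Lemma smooth_upto_mult n g h : smooth_upto n g -> smooth_upto n h ->
  smooth_upto n (fun x y => g x y * h x y).
Proof.
  revert g h. induction n as [|n IH]; intros g h G H.
  all: assert (Reg : forall u v, D u v -> regular_at g u v /\ regular_at h u v)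
         by (intros u v Huv;
             exact (conj (smooth_upto_regular _ g u v G Huv) (smooth_upto_regular _ h u v H Huv))).
  - apply smooth_upto_O. intros u v Huv. destruct (Reg u v Huv). apply regular_at_mult; assumption.
  - apply smooth_upto_S.
    + intros u v Huv. destruct (Reg u v Huv). apply regular_at_mult; assumption.
    + intros b.
      apply (smooth_upto_eq_on n (fun x y => partial b g x y * h x y + g x y * partial b h x y)).
      * intros u v Huv. destruct (Reg u v Huv). symmetry. apply partial_mult; assumption.
      * apply smooth_upto_plus; apply IH.
        -- exact (smooth_upto_partial n b g G).
        -- exact (smooth_upto_weaken n h H).
        -- exact (smooth_upto_weaken n g G).
        -- exact (smooth_upto_partial n b h H).
Qed.

Lemma smooth_upto_inv n g : (forall m, smooth_upto m g) -> (forall u v, D u v -> g u v <> 0) ->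
  smooth_upto n (fun x y => / g x y).
Proof.
  intros G Gnz. assert (Reg : forall u v, D u v -> regular_at g u v).
  { intros u v Huv. exact (smooth_upto_regular 0 g u v (G 0%nat) Huv). }
  assert (RegInv : forall u v, D u v -> regular_at (fun x y => / g x y) u v)
    by (intros u v Huv; exact (regular_at_inv g u v (Reg u v Huv) (Gnz u v Huv))).
  induction n as [|n IH].
  - exact (smooth_upto_O _ RegInv).
  - apply (smooth_upto_S _ _ RegInv).
    intros b. apply (smooth_upto_eq_on n (fun x y => (-1 * partial b g x y) * (/ g x y * / g x y))).
    + intros u v Huv. symmetry. exact (partial_inv b g u v (Reg u v Huv) (Gnz u v Huv)).
    + apply smooth_upto_mult; [apply smooth_upto_mult | apply smooth_upto_mult; exact IH].
      * apply smooth_upto_const.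
      * apply smooth_upto_partial, G.
Qed.

(* For [D = cdisc r] this is [smooth_on r] unfolded. *)
Definition smooth (g : fn2) : Prop := forall w u v, D u v -> regular_at (dpart w g) u v.

Lemma smooth_upto_of_smooth n g : smooth g -> smooth_upto n g.
Proof. intros G w _. exact (G w). Qed.

Lemma smooth_of_upto g : (forall n, smooth_upto n g) -> smooth g.
Proof. intros G w. exact (G (length w) w (le_n _)). Qed.

Lemma smooth_regular g u v : smooth g -> D u v -> regular_at g u v.
Proof. intros G. exact (G nil u v). Qed.

Lemma smooth_partial b g : smooth g -> smooth (partial b g).
Proof. intros G w. rewrite <- dpart_rcons. exact (G _). Qed.

Lemma smooth_eq_on g h : eq_on g h -> smooth g -> smooth h.
Proof.
  intros E G. apply smooth_of_upto. intros n.
  exact (smooth_upto_eq_on n g h E (smooth_upto_of_smooth n g G)).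
Qed.

Lemma smooth_const c : smooth (fun _ _ => c).
Proof. apply smooth_of_upto. intros n. apply smooth_upto_const. Qed.

Lemma smooth_plus g h : smooth g -> smooth h -> smooth (fun x y => g x y + h x y).
Proof.
  intros G H. apply smooth_of_upto. intros n.
  apply smooth_upto_plus; apply smooth_upto_of_smooth; assumption.
Qed.

Lemma smooth_mult g h : smooth g -> smooth h -> smooth (fun x y => g x y * h x y).
Proof.
  intros G H. apply smooth_of_upto. intros n.
  apply smooth_upto_mult; apply smooth_upto_of_smooth; assumption.
Qed.

Lemma smooth_inv g : smooth g -> (forall u v, D u v -> g u v <> 0) ->
  smooth (fun x y => / g x y).
Proof.
  intros G Gnz. apply smooth_of_upto. intros n.
  apply smooth_upto_inv; [intros m; apply smooth_upto_of_smooth, G | exact Gnz].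
Qed.

Lemma smooth_opp g : smooth g -> smooth (fun x y => - g x y).
Proof.
  intros G. apply (smooth_eq_on (fun x y => -1 * g x y)); [intros u v _; ring |].
  exact (smooth_mult _ _ (smooth_const (-1)) G).
Qed.

Lemma smooth_minus g h : smooth g -> smooth h -> smooth (fun x y => g x y - h x y).
Proof.
  intros G H. apply (smooth_eq_on (fun x y => g x y + - h x y)); [intros u v _; ring |].
  exact (smooth_plus _ _ G (smooth_opp h H)).
Qed.

Lemma smooth_schwarz g u v : smooth g -> D u v -> du (dv g) u v = dv (du g) u v.
Proof.
  intros G Huv. apply Schwarz.
  - apply (locally_2d_impl D); [| exact (D_open u v Huv)].
    apply locally_2d_forall. intros x y Hxy.
    destruct (smooth_regular g x y G Hxy) as (Gu & Gv & _).
    destruct (smooth_regular _ x y (smooth_partial false g G) Hxy) as (Gvu & _).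
    destruct (smooth_regular _ x y (smooth_partial true g G) Hxy) as (_ & Guv & _).
    exact (conj Gu (conj Gv (conj Gvu Guv))).
  - apply continuity_2d_pt_filterlim.
    exact (proj2 (proj2 (G [true; false] u v Huv))).
  - apply continuity_2d_pt_filterlim.
    exact (proj2 (proj2 (G [false; true] u v Huv))).
Qed.

Section Vanishing.

Variables u0 v0 : R.
Hypothesis D_base : D u0 v0.

(* [vanishes_to n g]: g = O(n) at (u0,v0) in the sense of the paper. *)
Definition vanishes_to (n : nat) (g : fn2) : Prop :=
  smooth g /\ forall w, (length w < n)%nat -> dpart w g u0 v0 = 0.

Lemma vanishes_to_O g : smooth g -> vanishes_to 0 g.
Proof. intros G. split; [exact G | intros w Hw; lia]. Qed.

Lemma vanishes_to_value n g : vanishes_to (S n) g -> g u0 v0 = 0.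
Proof. intros [_ G]. apply (G nil). simpl. lia. Qed.

Lemma vanishes_to_weaken n g : vanishes_to (S n) g -> vanishes_to n g.
Proof. intros [G G0]. split; [exact G | intros w Hw; apply G0; lia]. Qed.

Lemma vanishes_to_partial n b g : vanishes_to (S n) g -> vanishes_to n (partial b g).
Proof.
  intros [G G0]. split; [exact (smooth_partial b g G) |].
  intros w Hw. rewrite <- dpart_rcons. apply G0. rewrite length_app. simpl. lia.
Qed.

Lemma vanishes_to_S n g : smooth g -> g u0 v0 = 0 ->
  (forall b, vanishes_to n (partial b g)) -> vanishes_to (S n) g.
Proof.
  intros G G0 Gb. split; [exact G |].
  intros w. induction w as [|b w _] using rev_ind; intros Hw; [exact G0 |].
  rewrite dpart_rcons. apply (proj2 (Gb b)). rewrite length_app in Hw. simpl in Hw. lia.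
Qed.

Lemma vanishes_to_eq_on n g h : eq_on g h -> vanishes_to n g -> vanishes_to n h.
Proof.
  intros E [G G0]. split; [exact (smooth_eq_on g h E G) |].
  intros w Hw. rewrite <- (eq_on_dpart w g h E u0 v0 D_base). exact (G0 w Hw).
Qed.

Lemma vanishes_to_plus n g h : vanishes_to n g -> vanishes_to n h ->
  vanishes_to n (fun x y => g x y + h x y).
Proof.
  revert g h. induction n as [|n IH]; intros g h G H.
  - exact (vanishes_to_O _ (smooth_plus g h (proj1 G) (proj1 H))).
  - apply vanishes_to_S.
    + exact (smooth_plus g h (proj1 G) (proj1 H)).
    + rewrite (vanishes_to_value n g G), (vanishes_to_value n h H). ring.
    + intros b. apply (vanishes_to_eq_on n (fun x y => partial b g x y + partial b h x y)).
      * intros u v Huv. symmetry. apply partial_plus;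
          [exact (smooth_regular g u v (proj1 G) Huv) | exact (smooth_regular h u v (proj1 H) Huv)].
      * exact (IH _ _ (vanishes_to_partial n b g G) (vanishes_to_partial n b h H)).
Qed.

Lemma vanishes_to_mult n g h : vanishes_to n g -> smooth h ->
  vanishes_to n (fun x y => g x y * h x y).
Proof.
  revert g h. induction n as [|n IH]; intros g h G H.
  - exact (vanishes_to_O _ (smooth_mult g h (proj1 G) H)).
  - apply vanishes_to_S.
    + exact (smooth_mult g h (proj1 G) H).
    + rewrite (vanishes_to_value n g G). ring.
    + intros b.
      apply (vanishes_to_eq_on n (fun x y => partial b g x y * h x y + g x y * partial b h x y)).
      * intros u v Huv. symmetry. apply partial_mult;
          [exact (smooth_regular g u v (proj1 G) Huv) | exact (smooth_regular h u v H Huv)].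
      * apply vanishes_to_plus.
        -- exact (IH _ _ (vanishes_to_partial n b g G) H).
        -- exact (IH _ _ (vanishes_to_weaken n g G) (smooth_partial b h H)).
Qed.

Lemma vanishes_to_scal n c g : vanishes_to n g -> vanishes_to n (fun x y => c * g x y).
Proof.
  intros G. apply (vanishes_to_eq_on n (fun x y => g x y * c)); [intros u v _; ring |].
  exact (vanishes_to_mult n g _ G (smooth_const c)).
Qed.

Lemma vanishes_to_minus n g h : vanishes_to n g -> vanishes_to n h ->
  vanishes_to n (fun x y => g x y - h x y).
Proof.
  intros G H. apply (vanishes_to_eq_on n (fun x y => g x y + -1 * h x y)); [intros u v _; ring |].
  exact (vanishes_to_plus n g _ G (vanishes_to_scal n (-1) h H)).
Qed.

Lemma vanishes_to_det3 n (Y B C : nat -> fn2) :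
  (forall i, (i < 3)%nat -> vanishes_to n (Y i)) ->
  (forall i, (i < 3)%nat -> smooth (B i)) -> (forall i, (i < 3)%nat -> smooth (C i)) ->
  vanishes_to n (fun u v => det3 (fun i => Y i u v) (fun i => B i u v) (fun i => C i u v)).
Proof.
  intros HY HB HC.
  assert (Minor : forall i j, (i < 3)%nat -> (j < 3)%nat ->
    smooth (fun u v => B i u v * C j u v - B j u v * C i u v)).
  { intros i j Hi Hj.
    exact (smooth_minus _ _ (smooth_mult _ _ (HB i Hi) (HC j Hj))
                            (smooth_mult _ _ (HB j Hj) (HC i Hi))). }
  apply (vanishes_to_eq_on n (fun u v =>
    Y 0%nat u v * (B 1%nat u v * C 2%nat u v - B 2%nat u v * C 1%nat u v)
    - Y 1%nat u v * (B 0%nat u v * C 2%nat u v - B 2%nat u v * C 0%nat u v)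
    + Y 2%nat u v * (B 0%nat u v * C 1%nat u v - B 1%nat u v * C 0%nat u v)));
    [intros u v _; reflexivity |].
  apply vanishes_to_plus; [apply vanishes_to_minus |].
  - exact (vanishes_to_mult n _ _ (HY 0%nat ltac:(lia)) (Minor 1%nat 2%nat ltac:(lia) ltac:(lia))).
  - exact (vanishes_to_mult n _ _ (HY 1%nat ltac:(lia)) (Minor 0%nat 2%nat ltac:(lia) ltac:(lia))).
  - exact (vanishes_to_mult n _ _ (HY 2%nat ltac:(lia)) (Minor 0%nat 1%nat ltac:(lia) ltac:(lia))).
Qed.

Lemma vanishes_to_frame_coords n (A B C Y : nat -> fn2) (al be ga : fn2) :
  (forall i, (i < 3)%nat -> smooth (A i)) -> (forall i, (i < 3)%nat -> smooth (B i)) ->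
  (forall i, (i < 3)%nat -> smooth (C i)) -> (forall i, (i < 3)%nat -> vanishes_to n (Y i)) ->
  (forall u v, D u v -> det3 (fun i => A i u v) (fun i => B i u v) (fun i => C i u v) <> 0) ->
  (forall u v, D u v -> forall i, (i < 3)%nat ->
     Y i u v = al u v * A i u v + be u v * B i u v + ga u v * C i u v) ->
  vanishes_to n al /\ vanishes_to n be /\ vanishes_to n ga.
Proof.
  intros HA HB HC HY Hdet HE.
  set (det u v := det3 (fun i => A i u v) (fun i => B i u v) (fun i => C i u v)).
  assert (Sinv : smooth (fun u v => / det u v)).
  { apply smooth_inv; [| exact Hdet].
    exact (proj1 (vanishes_to_det3 0 A B C (fun i Hi => vanishes_to_O _ (HA i Hi)) HB HC)). }
  pose proof (fun u v Huv => cramer3 _ _ _ _ (al u v) (be u v) (ga u v) (Hdet u v Huv) (HE u v Huv))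
    as Cr.
  split; [| split].
  - apply (vanishes_to_eq_on n (fun u v =>
      det3 (fun i => Y i u v) (fun i => B i u v) (fun i => C i u v) * / det u v)).
    + intros u v Huv. symmetry. exact (proj1 (Cr u v Huv)).
    + exact (vanishes_to_mult n _ _ (vanishes_to_det3 n Y B C HY HB HC) Sinv).
  - apply (vanishes_to_eq_on n (fun u v =>
      -1 * det3 (fun i => Y i u v) (fun i => A i u v) (fun i => C i u v) * / det u v)).
    + intros u v Huv. rewrite (proj1 (proj2 (Cr u v Huv))).
      rewrite (det3_swap12 (fun i => A i u v)). unfold det, Rdiv. ring.
    + exact (vanishes_to_mult n _ _
               (vanishes_to_scal n (-1) _ (vanishes_to_det3 n Y A C HY HA HC)) Sinv).
  - apply (vanishes_to_eq_on n (fun u v =>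
      det3 (fun i => Y i u v) (fun i => A i u v) (fun i => B i u v) * / det u v)).
    + intros u v Huv. rewrite (proj2 (proj2 (Cr u v Huv))).
      rewrite (det3_rotate (fun i => Y i u v)). reflexivity.
    + exact (vanishes_to_mult n _ _ (vanishes_to_det3 n Y A B HY HA HB) Sinv).
Qed.

Section Surface.

Variables (f xi : nat -> fn2) (rho b11 b12 b22 G1uu G2uu G1uv G2uv G1vv G2vv : fn2).
Variable lambda0 : R.

Hypothesis f_smooth : forall i, (i < 3)%nat -> smooth (f i).
Hypothesis xi_smooth : forall i, (i < 3)%nat -> smooth (xi i).
Hypothesis frame_det : forall u v, D u v ->
  det3 (fun i => du (f i) u v) (fun i => dv (f i) u v) (fun i => xi i u v) <> 0.
Hypothesis gauss_uu : forall u v, D u v -> forall i, (i < 3)%nat ->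
  du (du (f i)) u v = G1uu u v * du (f i) u v + G2uu u v * dv (f i) u v + rho u v * xi i u v.
Hypothesis gauss_uv : forall u v, D u v -> forall i, (i < 3)%nat ->
  dv (du (f i)) u v = G1uv u v * du (f i) u v + G2uv u v * dv (f i) u v.
Hypothesis gauss_vv : forall u v, D u v -> forall i, (i < 3)%nat ->
  dv (dv (f i)) u v = G1vv u v * du (f i) u v + G2vv u v * dv (f i) u v + rho u v * xi i u v.
Hypothesis weingarten_u : forall u v, D u v -> forall i, (i < 3)%nat ->
  du (xi i) u v = - b11 u v * du (f i) u v - b12 u v * dv (f i) u v.
Hypothesis weingarten_v : forall u v, D u v -> forall i, (i < 3)%nat ->
  dv (xi i) u v = - b12 u v * du (f i) u v - b22 u v * dv (f i) u v.
Hypothesis b22_base : b22 u0 v0 = lambda0.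
Hypothesis lambda0_neq0 : lambda0 <> 0.

Lemma fu_smooth i : (i < 3)%nat -> smooth (du (f i)).
Proof. intros Hi. exact (smooth_partial true _ (f_smooth i Hi)). Qed.

Lemma fv_smooth i : (i < 3)%nat -> smooth (dv (f i)).
Proof. intros Hi. exact (smooth_partial false _ (f_smooth i Hi)). Qed.

Lemma smooth_frame_coords (Y : nat -> fn2) (al be ga : fn2) :
  (forall i, (i < 3)%nat -> smooth (Y i)) ->
  (forall u v, D u v -> forall i, (i < 3)%nat ->
     Y i u v = al u v * du (f i) u v + be u v * dv (f i) u v + ga u v * xi i u v) ->
  smooth al /\ smooth be /\ smooth ga.
Proof.
  intros HY HE.
  destruct (vanishes_to_frame_coords 0 (fun i => du (f i)) (fun i => dv (f i)) xi Y al be ga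
              fu_smooth fv_smooth xi_smooth (fun i Hi => vanishes_to_O _ (HY i Hi)) frame_det HE)
    as ([A _] & [B _] & [C _]).
  exact (conj A (conj B C)).
Qed.

Lemma smooth_of_opp g : smooth (fun x y => - g x y) -> smooth g.
Proof.
  intros G. exact (smooth_eq_on _ g (fun u v _ => Ropp_involutive (g u v)) (smooth_opp _ G)).
Qed.

Lemma smooth_shape_operator : smooth b11 /\ smooth b12 /\ smooth b22.
Proof.
  destruct (smooth_frame_coords (fun i => du (xi i)) (fun x y => - b11 x y) (fun x y => - b12 x y)
              (fun _ _ => 0) (fun i Hi => smooth_partial true _ (xi_smooth i Hi)))
    as (S11 & S12 & _).
  { intros u v Huv i Hi. rewrite (weingarten_u u v Huv i Hi). ring. }
  destruct (smooth_frame_coords (fun i => dv (xi i)) (fun x y => - b12 x y) (fun x y => - b22 x y)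
              (fun _ _ => 0) (fun i Hi => smooth_partial false _ (xi_smooth i Hi)))
    as (_ & S22 & _).
  { intros u v Huv i Hi. rewrite (weingarten_v u v Huv i Hi). ring. }
  exact (conj (smooth_of_opp _ S11) (conj (smooth_of_opp _ S12) (smooth_of_opp _ S22))).
Qed.

Lemma smooth_christoffel :
  smooth G1uu /\ smooth G2uu /\ smooth G1uv /\ smooth G2uv /\ smooth G1vv /\ smooth G2vv.
Proof.
  destruct (smooth_frame_coords (fun i => du (du (f i))) G1uu G2uu rho
              (fun i Hi => smooth_partial true _ (fu_smooth i Hi)) gauss_uu) as (S1uu & S2uu & _).
  destruct (smooth_frame_coords (fun i => dv (du (f i))) G1uv G2uv (fun _ _ => 0)
              (fun i Hi => smooth_partial false _ (fu_smooth i Hi))) as (S1uv & S2uv & _).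
  { intros u v Huv i Hi. rewrite (gauss_uv u v Huv i Hi). ring. }
  destruct (smooth_frame_coords (fun i => dv (dv (f i))) G1vv G2vv rho
              (fun i Hi => smooth_partial false _ (fv_smooth i Hi)) gauss_vv) as (S1vv & S2vv & _).
  exact (conj S1uu (conj S2uu (conj S1uv (conj S2uv (conj S1vv S2vv))))).
Qed.

Lemma xi_uv_frame i u v : (i < 3)%nat -> D u v ->
  dv (du (xi i)) u v =
    (- dv b11 u v - b11 u v * G1uv u v - b12 u v * G1vv u v) * du (f i) u v
    + (- b11 u v * G2uv u v - dv b12 u v - b12 u v * G2vv u v) * dv (f i) u v
    + (- b12 u v * rho u v) * xi i u v.
Proof.
  intros Hi Huv. destruct smooth_shape_operator as (S11 & S12 & _).
  assert (E : eq_on (du (xi i)) (fun x y => - b11 x y * du (f i) x y + - b12 x y * dv (f i) x y)).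
  { intros x y Hxy. rewrite (weingarten_u x y Hxy i Hi). ring. }
  change (dv (du (xi i)) u v) with (partial false (du (xi i)) u v).
  rewrite (eq_on_partial false _ _ E u v Huv), partial_mult_plus_mult.
  - rewrite !partial_opp. cbn [partial].
    rewrite (gauss_uv u v Huv i Hi), (gauss_vv u v Huv i Hi). ring.
  - exact (smooth_regular _ u v (smooth_opp _ S11) Huv).
  - exact (smooth_regular _ u v (fu_smooth i Hi) Huv).
  - exact (smooth_regular _ u v (smooth_opp _ S12) Huv).
  - exact (smooth_regular _ u v (fv_smooth i Hi) Huv).
Qed.

Lemma xi_vu_frame i u v : (i < 3)%nat -> D u v ->
  du (dv (xi i)) u v =
    (- du b12 u v - b12 u v * G1uu u v - b22 u v * G1uv u v) * du (f i) u v
    + (- b12 u v * G2uu u v - du b22 u v - b22 u v * G2uv u v) * dv (f i) u v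
    + (- b12 u v * rho u v) * xi i u v.
Proof.
  intros Hi Huv. destruct smooth_shape_operator as (_ & S12 & S22).
  assert (E : eq_on (dv (xi i)) (fun x y => - b12 x y * du (f i) x y + - b22 x y * dv (f i) x y)).
  { intros x y Hxy. rewrite (weingarten_v x y Hxy i Hi). ring. }
  change (du (dv (xi i)) u v) with (partial true (dv (xi i)) u v).
  rewrite (eq_on_partial true _ _ E u v Huv), partial_mult_plus_mult.
  - rewrite !partial_opp. cbn [partial].
    rewrite (smooth_schwarz (f i) u v (f_smooth i Hi) Huv).
    rewrite (gauss_uu u v Huv i Hi), (gauss_uv u v Huv i Hi). ring.
  - exact (smooth_regular _ u v (smooth_opp _ S12) Huv).
  - exact (smooth_regular _ u v (fu_smooth i Hi) Huv).
  - exact (smooth_regular _ u v (smooth_opp _ S22) Huv).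
  - exact (smooth_regular _ u v (fv_smooth i Hi) Huv).
Qed.

Lemma codazzi u v : D u v ->
  dv b11 u v = du b12 u v - (b11 u v - b22 u v) * G1uv u v + b12 u v * (G1uu u v - G1vv u v) /\
  du b22 u v = dv b12 u v + (b11 u v - b22 u v) * G2uv u v + b12 u v * (G2vv u v - G2uu u v).
Proof.
  intros Huv.
  edestruct frame_coords_unique as (E1 & E2 & _); [exact (frame_det u v Huv) | |].
  - intros i Hi. pose proof (smooth_schwarz (xi i) u v (xi_smooth i Hi) Huv) as S.
    rewrite (xi_uv_frame i u v Hi Huv), (xi_vu_frame i u v Hi Huv) in S.
    exact (eq_sym S).
  - split; lra.
Qed.

Lemma lambda0_minus_b22_vanishes_to n :
  vanishes_to n (fun u v => b11 u v - b22 u v) -> vanishes_to n b12 ->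
  vanishes_to n (fun u v => lambda0 - b22 u v).
Proof.
  intros HM H12.
  destruct smooth_shape_operator as (S11 & _ & S22).
  destruct smooth_christoffel as (S1uu & S2uu & S1uv & S2uv & S1vv & S2vv).
  destruct n as [|m]; [exact (vanishes_to_O _ (smooth_minus _ _ (smooth_const _) S22)) |].
  assert (HM' := vanishes_to_weaken m _ HM). assert (H12' := vanishes_to_weaken m _ H12).
  apply vanishes_to_S; [exact (smooth_minus _ _ (smooth_const _) S22) | rewrite b22_base; ring |].
  intros b. destruct b.
  - apply (vanishes_to_eq_on m (fun u v =>
      -1 * (dv b12 u v + (b11 u v - b22 u v) * G2uv u v + b12 u v * (G2vv u v - G2uu u v)))).
    + intros u v Huv.
      rewrite (partial_minus true _ b22 u v (regular_at_const _ u v)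
                 (smooth_regular b22 u v S22 Huv)).
      rewrite partial_const. cbn [partial]. rewrite (proj2 (codazzi u v Huv)). ring.
    + apply vanishes_to_scal, vanishes_to_plus; [apply vanishes_to_plus |].
      * exact (vanishes_to_partial m false b12 H12).
      * exact (vanishes_to_mult m _ _ HM' S2uv).
      * exact (vanishes_to_mult m _ _ H12' (smooth_minus _ _ S2vv S2uu)).
  - apply (vanishes_to_eq_on m (fun u v => dv (fun x y => b11 x y - b22 x y) u v
      - (du b12 u v - (b11 u v - b22 u v) * G1uv u v + b12 u v * (G1uu u v - G1vv u v)))).
    + intros u v Huv.
      rewrite (partial_minus false _ b22 u v (regular_at_const _ u v)
                 (smooth_regular b22 u v S22 Huv)).
      change (dv (fun x y => b11 x y - b22 x y) u v)
        with (partial false (fun x y => b11 x y - b22 x y) u v).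
      rewrite (partial_minus false b11 b22 u v (smooth_regular b11 u v S11 Huv)
                 (smooth_regular b22 u v S22 Huv)).
      rewrite partial_const. cbn [partial]. rewrite (proj1 (codazzi u v Huv)). ring.
    + apply vanishes_to_minus; [exact (vanishes_to_partial m false _ HM) |].
      apply vanishes_to_plus; [apply vanishes_to_minus |].
      * exact (vanishes_to_partial m true b12 H12).
      * exact (vanishes_to_mult m _ _ HM' S1uv).
      * exact (vanishes_to_mult m _ _ H12' (smooth_minus _ _ S1uu S1vv)).
Qed.

Lemma shape_minus_lambda0_vanishes_to n :
  vanishes_to n (fun u v => b11 u v - b22 u v) -> vanishes_to n b12 ->
  vanishes_to n (fun u v => lambda0 - b11 u v) /\ vanishes_to n (fun u v => lambda0 - b22 u v).
Proof.
  intros HM H12. pose proof (lambda0_minus_b22_vanishes_to n HM H12) as HQ.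
  split; [| exact HQ].
  apply (vanishes_to_eq_on n (fun u v => (lambda0 - b22 u v) - (b11 u v - b22 u v)));
    [intros u v _; ring | exact (vanishes_to_minus n _ _ HQ HM)].
Qed.

Definition focal (i : nat) : fn2 := fun u v =>
  f i u v + / lambda0 * xi i u v - (f i u0 v0 + / lambda0 * xi i u0 v0).

Lemma smooth_focal i : (i < 3)%nat -> smooth (focal i).
Proof.
  intros Hi.
  exact (smooth_minus _ _ (smooth_plus _ _ (f_smooth i Hi)
           (smooth_mult _ _ (smooth_const _) (xi_smooth i Hi))) (smooth_const _)).
Qed.

Lemma partial_focal b i u v : (i < 3)%nat -> D u v ->
  partial b (focal i) u v = partial b (f i) u v + / lambda0 * partial b (xi i) u v.
Proof.
  intros Hi Huv.
  pose proof (smooth_regular _ u v (f_smooth i Hi) Huv) as Rf.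
  pose proof (smooth_regular _ u v
                (smooth_mult _ _ (smooth_const (/ lambda0)) (xi_smooth i Hi)) Huv) as Rxi.
  unfold focal.
  rewrite (partial_minus b _ _ u v (regular_at_plus _ _ u v Rf Rxi) (regular_at_const _ u v)).
  rewrite (partial_plus b _ _ u v Rf Rxi), partial_scal, partial_const. ring.
Qed.

Lemma focal_u i : (i < 3)%nat ->
  eq_on (du (focal i))
    (fun u v => / lambda0 * ((lambda0 - b11 u v) * du (f i) u v - b12 u v * dv (f i) u v)).
Proof.
  intros Hi u v Huv. change (du (focal i) u v) with (partial true (focal i) u v).
  rewrite (partial_focal true i u v Hi Huv). cbn [partial].
  rewrite (weingarten_u u v Huv i Hi). field. exact lambda0_neq0.
Qed.

Lemma focal_v i : (i < 3)%nat ->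
  eq_on (dv (focal i))
    (fun u v => / lambda0 * ((lambda0 - b22 u v) * dv (f i) u v - b12 u v * du (f i) u v)).
Proof.
  intros Hi u v Huv. change (dv (focal i) u v) with (partial false (focal i) u v).
  rewrite (partial_focal false i u v Hi Huv). cbn [partial].
  rewrite (weingarten_v u v Huv i Hi). field. exact lambda0_neq0.
Qed.

Lemma focal_vanishes_to_of_umbilic n :
  vanishes_to n (fun u v => b11 u v - b22 u v) -> vanishes_to n b12 ->
  forall i, (i < 3)%nat -> vanishes_to (S n) (focal i).
Proof.
  intros HM H12 i Hi.
  destruct (shape_minus_lambda0_vanishes_to n HM H12) as (HP & HQ).
  apply vanishes_to_S; [exact (smooth_focal i Hi) | unfold focal; ring |].
  intros b. destruct b.
  - apply (vanishes_to_eq_on n _ _ (eq_on_sym _ _ (focal_u i Hi))).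
    apply vanishes_to_scal, vanishes_to_minus.
    + exact (vanishes_to_mult n _ _ HP (fu_smooth i Hi)).
    + exact (vanishes_to_mult n _ _ H12 (fv_smooth i Hi)).
  - apply (vanishes_to_eq_on n _ _ (eq_on_sym _ _ (focal_v i Hi))).
    apply vanishes_to_scal, vanishes_to_minus.
    + exact (vanishes_to_mult n _ _ HQ (fv_smooth i Hi)).
    + exact (vanishes_to_mult n _ _ H12 (fu_smooth i Hi)).
Qed.

Lemma umbilic_of_focal_vanishes_to n :
  (forall i, (i < 3)%nat -> vanishes_to (S n) (focal i)) ->
  vanishes_to n (fun u v => b11 u v - b22 u v) /\ vanishes_to n b12.
Proof.
  intros HF.
  destruct (vanishes_to_frame_coords n (fun i => du (f i)) (fun i => dv (f i)) xi
              (fun i => du (focal i)) (fun u v => / lambda0 * (lambda0 - b11 u v))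
              (fun u v => - / lambda0 * b12 u v) (fun _ _ => 0) fu_smooth fv_smooth xi_smooth
              (fun i Hi => vanishes_to_partial n true _ (HF i Hi)) frame_det)
    as (HP & H12 & _).
  { intros u v Huv i Hi. rewrite (focal_u i Hi u v Huv). ring. }
  destruct (vanishes_to_frame_coords n (fun i => du (f i)) (fun i => dv (f i)) xi
              (fun i => dv (focal i)) (fun u v => - / lambda0 * b12 u v)
              (fun u v => / lambda0 * (lambda0 - b22 u v)) (fun _ _ => 0)
              fu_smooth fv_smooth xi_smooth
              (fun i Hi => vanishes_to_partial n false _ (HF i Hi)) frame_det)
    as (_ & HQ & _).
  { intros u v Huv i Hi. rewrite (focal_v i Hi u v Huv). ring. }
  split.
  - apply (vanishes_to_eq_on n (fun u v =>
      lambda0 * (/ lambda0 * (lambda0 - b22 u v)) - lambda0 * (/ lambda0 * (lambda0 - b11 u v)))).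
    + intros u v _. field. exact lambda0_neq0.
    + exact (vanishes_to_minus n _ _ (vanishes_to_scal n _ _ HQ) (vanishes_to_scal n _ _ HP)).
  - apply (vanishes_to_eq_on n (fun u v => - lambda0 * (- / lambda0 * b12 u v))).
    + intros u v _. field. exact lambda0_neq0.
    + exact (vanishes_to_scal n _ _ H12).
Qed.

Theorem umbilic_order_iff_focal_order n :
  (forall w, (length w < n)%nat ->
     dpart w (fun u v => b11 u v - b22 u v) u0 v0 = 0 /\
     dpart w (fun u v => 2 * b12 u v) u0 v0 = 0)
  <-> (forall i, (i < 3)%nat -> forall w, (length w < S n)%nat -> dpart w (focal i) u0 v0 = 0).
Proof.
  destruct smooth_shape_operator as (S11 & S12 & S22).
  split.
  - intros H i Hi.
    assert (HM : vanishes_to n (fun u v => b11 u v - b22 u v))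
      by exact (conj (smooth_minus _ _ S11 S22) (fun w Hw => proj1 (H w Hw))).
    assert (H2 : vanishes_to n (fun u v => 2 * b12 u v))
      by exact (conj (smooth_mult _ _ (smooth_const 2) S12) (fun w Hw => proj2 (H w Hw))).
    assert (H12 : vanishes_to n b12).
    { apply (vanishes_to_eq_on n (fun u v => / 2 * (2 * b12 u v))); [intros u v _; field |].
      exact (vanishes_to_scal n _ _ H2). }
    exact (proj2 (focal_vanishes_to_of_umbilic n HM H12 i Hi)).
  - intros H.
    destruct (umbilic_of_focal_vanishes_to n (fun i Hi => conj (smooth_focal i Hi) (H i Hi)))
      as ((_ & HM) & H12).
    destruct (vanishes_to_scal n 2 _ H12) as (_ & H2).
    intros w Hw. exact (conj (HM w Hw) (H2 w Hw)).
Qed.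

End Surface.

End Vanishing.

End OpenDomain.

Lemma cdisc_open r u v : cdisc r u v -> locally_2d (cdisc r) u v.
Proof.
  intros H. apply locally_2d_locally.
  pose proof (continuous_fst u v) as Cu. pose proof (continuous_snd u v) as Cv.
  pose proof (continuous_plus _ _ _ (continuous_mult _ _ _ Cu Cu) (continuous_mult _ _ _ Cv Cv))
    as Hc.
  apply (Hc (fun y => y < r * r)). exact (open_lt (r * r) _ H).
Qed.

Theorem lemma4p3
  (r : R) (f xi : nat -> fn2)
  (rho b11 b12 b22 : fn2)
  (G1uu G2uu G1uv G2uv G1vv G2vv : fn2)
  (lambda0 : R) (k : nat)
  (Hr : 0 < r)
  (Hf_smooth : forall i, (i < 3)%nat -> smooth_on r (f i))
  (Hxi_smooth : forall i, (i < 3)%nat -> smooth_on r (xi i))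
  (* f is an immersion and xi is transversal *)
  (Htrans : forall u v, cdisc r u v ->
     det3 (fun i => du (f i) u v) (fun i => dv (f i) u v)
          (fun i => xi i u v) <> 0)
  (* Gauss formula in isothermal coordinates: h11 = h22 = rho > 0, h12 = 0 *)
  (Hrho : forall u v, cdisc r u v -> 0 < rho u v)
  (Huu : forall u v, cdisc r u v -> forall i, (i < 3)%nat ->
     du (du (f i)) u v = G1uu u v * du (f i) u v + G2uu u v * dv (f i) u v
                         + rho u v * xi i u v)
  (Huv : forall u v, cdisc r u v -> forall i, (i < 3)%nat ->
     dv (du (f i)) u v = G1uv u v * du (f i) u v + G2uv u v * dv (f i) u v)
  (Hvv : forall u v, cdisc r u v -> forall i, (i < 3)%nat ->
     dv (dv (f i)) u v = G1vv u v * du (f i) u v + G2vv u v * dv (f i) u v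
                         + rho u v * xi i u v)
  (* Weingarten formula, equiaffine (tau = 0), shape operator (b_ij), b12 = b21 *)
  (Hxu : forall u v, cdisc r u v -> forall i, (i < 3)%nat ->
     du (xi i) u v = - b11 u v * du (f i) u v - b12 u v * dv (f i) u v)
  (Hxv : forall u v, cdisc r u v -> forall i, (i < 3)%nat ->
     dv (xi i) u v = - b12 u v * du (f i) u v - b22 u v * dv (f i) u v)
  (* (0,0) is umbilical with lambda0 = b11(0,0) = b22(0,0) <> 0 *)
  (Hb11 : b11 0 0 = lambda0) (Hb22 : b22 0 0 = lambda0) (Hb12 : b12 0 0 = 0)
  (Hl0 : lambda0 <> 0)
  (Hk : (1 <= k)%nat) :
  (forall w : list bool, (length w <= k - 1)%nat ->
      dpart w (fun u v => b11 u v - b22 u v) 0 0 = 0 /\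
      dpart w (fun u v => 2 * b12 u v) 0 0 = 0)
  <->
  (forall i, (i < 3)%nat -> forall w : list bool, (length w <= k)%nat ->
      dpart w (fun u v => f i u v + / lambda0 * xi i u v
                          - (f i 0 0 + / lambda0 * xi i 0 0)) 0 0 = 0).
Proof.
  assert (H0 : cdisc r 0 0) by (unfold cdisc; nra).
  pose proof (umbilic_order_iff_focal_order (cdisc r) (cdisc_open r) 0 0 H0 f xi rho b11 b12 b22
                G1uu G2uu G1uv G2uv G1vv G2vv lambda0 Hf_smooth Hxi_smooth Htrans
                Huu Huv Hvv Hxu Hxv Hb22 Hl0 k) as E.
  split.
  - intros H i Hi w Hw.
    exact (proj1 E (fun w' Hw' => H w' ltac:(lia)) i Hi w ltac:(lia)).
  - intros H w Hw.
    exact (proj2 E (fun i Hi w' Hw' => H i Hi w' ltac:(lia)) w ltac:(lia)).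
Qed.
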